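(* Let $G$ be a finite abelian group, let $G_1,\dots,G_n,H$ be subgroups of $G$, and fix a character $\chi$ on $G$. Let $K=\bigcap_{i=1}^nG_i$. Then the number of tuples $(\chi_1,\dots,\chi_n)\in\widehat{G}^n$ such that $\chi_i(g)=1$ for all $g\in G_i$ and all $1\le i\le n$, and $\bigl(\prod_{i=1}^n\chi_i\bigr)(h)=\chi(h)$ for all $h\in H$, equals \[ \frac{|H\cap K|}{|H|}\cdot\prod_{i=1}^n\frac{|G|}{|G_i|}\cdot\llbracket\chi(H\cap K)=1\rrbracket. \]
   Context: $\widehat{G}$ is the group of characters (homomorphisms to the complex unit circle) of $G$. $\llbracket P\rrbracket$ is $1$ if $P$ holds and $0$ otherwise; $\chi(H\cap K)=1$ means $\chi$ is trivial on $H\cap K$. *)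

From HB Require Import structures.
From mathcomp Require Import all_boot all_order all_algebra all_fingroup all_solvable all_field all_character.
Set Implicit Arguments. Unset Strict Implicit. Unset Printing Implicit Defensive.
Import Order.TTheory GRing.Theory Num.Theory.
Local Open Scope ring_scope.
Local Open Scope group_scope.

(* Characters of G (homomorphisms G -> unit circle) are the linear characters
   'chi_i (i : Iirr G, 'chi_i \is a linear_char) of G.  A tuple of characters
   is a finite function t : 'I_n -> Iirr G. *)
Definition char_tuples (gT : finGroupType) (G : {group gT}) (n : nat)
    (Gs : 'I_n -> {group gT}) (H : {group gT}) (chi : 'CF(G)) :
    {set {ffun 'I_n -> Iirr G}} :=
  [set t : {ffun 'I_n -> Iirr G} |
     [forall i, 'chi_(t i) \is a linear_char]
  && [forall i, forall g in Gs i, 'chi_(t i) g == 1%R]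
  && [forall h in H, ((\prod_(i < n) 'chi_(t i)) h == chi h)%R]].

From HB Require Import structures.
From mathcomp Require Import all_boot all_order all_algebra all_fingroup all_solvable all_field all_character.
Set Implicit Arguments.
Unset Strict Implicit.
Unset Printing Implicit Defensive.

Import Order.TTheory GRing.Theory Num.Theory.
Local Open Scope ring_scope.

(* Each defining condition of a tuple is detected by a character average:
   [xi = chi on H] is |H|^-1 sum_(h in H) xi h / chi h, and summing
   [chi_j trivial on G_i] chi_j h over the characters j gives |G : G_i| [h in G_i].
   After exchanging the sums, the sum over tuples factors into a product over i,
   which kills every h outside K; what remains is |H|^-1 prod_i |G : G_i| times
   sum_(h in H :&: K) chi h^-1, and this sum is |H :&: K| or 0 according as chi
   is trivial on H :&: K or not. *)

Lemma natr_prod_bool (R : pzSemiRingType) (I : finType) (P : pred I) :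
  \prod_i (P i)%:R = [forall i, P i]%:R :> R.
Proof.
rewrite -natr_prod -(big_andE predT); congr _%:R.
by elim/big_rec2: _ => // i m b _ ->; rewrite mulnb.
Qed.

Section MultiplicativeSum.

Variables (R : idomainType) (gT : finGroupType) (N : {group gT}) (f : gT -> R).
Hypothesis fM : {in N &, {morph f : x y / (x * y)%g >-> x * y}}.

(* If f g0 != 1, translating by g0 shows that the sum S satisfies S = f g0 * S. *)
Lemma sum_multiplicative :
  \sum_(g in N) f g = #|N|%:R * [forall g in N, f g == 1]%:R.
Proof.
have [/forall_inP f1 | /forall_inPn [g0 Ng0 /negPf f_g0]] :=
  boolP [forall g in N, f g == 1].
  by rewrite mulr1 -sumr_const; apply: eq_bigr => g /f1 /eqP.
rewrite mulr0; set S := \sum_(g in N) f g.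
have S_g0 : S = f g0 * S.
  rewrite /S big_distrr (reindex_inj (mulgI g0)) /=.
  by apply: eq_big => g; rewrite groupMl // => Ng; rewrite fM.
have : (1 - f g0) * S == 0 by rewrite mulrBl mul1r -S_g0 subrr.
by rewrite mulf_eq0 subr_eq0 eq_sym f_g0 => /eqP.
Qed.

End MultiplicativeSum.

Lemma lin_char_eq_on_avg (gT : finGroupType) (G H : {group gT}) (xi chi : 'CF(G)) :
    H \subset G -> xi \is a linear_char -> chi \is a linear_char ->
  [forall h in H, xi h == chi h]%:R = #|H|%:R^-1 * \sum_(h in H) xi h / chi h.
Proof.
move=> sHG Lxi Lchi; have HG h : h \in H -> h \in G := subsetP sHG h.
rewrite sum_multiplicative ?mulKf ?neq0CG //; last first.
  by move=> a b /HG Ga /HG Gb; rewrite !lin_charM // invfM mulrACA.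
do 2 f_equal; apply: eq_forallb_in => h /HG Gh.
by rewrite -[RHS](inj_eq (mulIf (lin_char_neq0 Lchi Gh))) divfK ?mul1r ?lin_char_neq0.
Qed.

Section AbelianCharacters.

Variables (gT : finGroupType) (G : {group gT}).
Hypothesis abG : abelian G.

Lemma sum_irr_abelian x :
  \sum_(j : Iirr G) 'chi[G]_j x = (#|G| * (x == 1%g))%:R.
Proof.
have [Gx | notGx] := boolP (x \in G); last first.
  rewrite big1 => [|j _]; last by rewrite cfun0.
  have /negPf -> : x != 1%g by apply: contraNneq notGx => ->.
  by rewrite muln0.
have := second_orthogonality_relation x (group1 G).
rewrite class1G inE (eq_bigr (fun j => 'chi[G]_j x)) => [->|j _].
  by case: eqP => [->|_]; rewrite ?muln0 // cent11T setIT muln1.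
by rewrite lin_char1 ?conjC1 ?mulr1 //; apply/char_abelianP.
Qed.

Lemma sum_irr_trivial_on (N : {group gT}) x : N \subset G -> x \in G ->
  \sum_(j : Iirr G) [forall g in N, 'chi[G]_j g == 1]%:R * 'chi_j x
    = #|G|%:R / #|N|%:R * (x \in N)%:R.
Proof.
move=> sNG Gx; have NG g : g \in N -> g \in G := subsetP sNG g.
have /char_abelianP Lirr := abG.
have trivial_avg j : [forall g in N, 'chi[G]_j g == 1]%:R
    = #|N|%:R^-1 * \sum_(g in N) 'chi[G]_j g.
  by rewrite sum_multiplicative ?mulKf ?neq0CG // => a b /NG Ga /NG Gb; rewrite lin_charM.
transitivity (#|N|%:R^-1 * \sum_(g in N) \sum_(j : Iirr G) 'chi[G]_j (g * x)%g).
  rewrite exchange_big big_distrr; apply: eq_bigr => j _ /=.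
  rewrite trivial_avg -mulrA mulr_suml; congr (_ * _).
  by apply: eq_bigr => g /NG Gg; rewrite lin_charM.
under eq_bigr do rewrite sum_irr_abelian natrM mulg_eq1.
rewrite -big_distrr /= mulrCA mulrA; congr (_ * _).
have [Nx | notNx] := boolP (x \in N).
  by rewrite (bigD1 x^-1%g) ?groupV //= eqxx big1 ?addr0 // => g /andP[_ /negPf->].
by rewrite big1 // => g Ng; case: eqP => // g_x; rewrite -groupV -g_x Ng in notNx.
Qed.

End AbelianCharacters.

Section CharTuples.

Variables (gT : finGroupType) (G : {group gT}) (n : nat).
Variables (Gs : 'I_n -> {group gT}) (H : {group gT}) (chi : 'CF(G)).
Hypotheses (abG : abelian G) (sHG : H \subset G) (Lchi : chi \is a linear_char).

Let trivial_on i (j : Iirr G) : algC := [forall g in Gs i, 'chi[G]_j g == 1]%:R.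

Lemma card_char_tuples_sum :
  #|char_tuples Gs H chi|%:R = \sum_(t : {ffun 'I_n -> Iirr G})
    (\prod_i trivial_on i (t i)) * [forall h in H, (\prod_i 'chi_(t i)) h == chi h]%:R.
Proof.
have /char_abelianP Lirr := abG.
rewrite -sum1_card natr_sum big_mkcond /=; apply: eq_bigr => t _; rewrite inE.
have -> : [forall i, 'chi_(t i) \is a linear_char] by apply/forallP.
by rewrite /trivial_on natr_prod_bool -natrM mulnb; case: (_ && _).
Qed.

Lemma card_char_tuples_avg :
  #|char_tuples Gs H chi|%:R = #|H|%:R^-1 * \sum_(h in H)
    (chi h)^-1 * \prod_i \sum_(j : Iirr G) trivial_on i j * 'chi_j h.
Proof.
have /char_abelianP Lirr := abG.
rewrite card_char_tuples_sum.
under eq_bigr => t _ do rewrite lin_char_eq_on_avg ?rpred_prod //.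
transitivity (#|H|%:R^-1 * \sum_(h in H) \sum_(t : {ffun 'I_n -> Iirr G})
                (chi h)^-1 * \prod_i (trivial_on i (t i) * 'chi_(t i) h)).
  rewrite exchange_big big_distrr; apply: eq_bigr => t _ /=.
  rewrite mulrCA big_distrr; congr (_ * _); apply: eq_bigr => h /(subsetP sHG) Gh.
  by rewrite prod_cfunE // big_split /= mulrA mulrC.
by congr (_ * _); apply: eq_bigr => h _; rewrite bigA_distr_bigA big_distrr.
Qed.

End CharTuples.

Theorem lemma6p10 (gT : finGroupType) (G : {group gT}) (n : nat)
    (Gs : 'I_n -> {group gT}) (H : {group gT}) (chi : 'CF(G))
    (abG : abelian G) (sGsG : forall i, Gs i \subset G) (sHG : H \subset G)
    (lin_chi : chi \is a linear_char) :
  let K := (\bigcap_(i < n) Gs i)%g in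
  (#|char_tuples Gs H chi|)%:R =
    (#|(H :&: K)%g|)%:R / (#|H|)%:R
    * \prod_(i < n) ((#|G|)%:R / (#|Gs i|)%:R)
    * (if [forall h in (H :&: K)%g, chi h == 1] then 1 else 0) :> algC.
Proof.
move=> K.
have inK h : [forall i, h \in Gs i] = (h \in K).
  by apply/forallP/bigcapP => [Gs_h i _ | Gs_h i]; apply: Gs_h.
rewrite card_char_tuples_avg //.
under eq_bigr => h /(subsetP sHG) Gh.
  rewrite (eq_bigr _ (fun i _ => sum_irr_trivial_on abG (sGsG i) Gh)).
  by rewrite big_split /= natr_prod_bool inK mulrCA mulr_natr mulrb; over.
rewrite -big_distrr /= -big_mkcondr.
rewrite (eq_bigl (mem (H :&: K)%G)) => [|h]; last by rewrite !inE.
rewrite sum_multiplicative; last first.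
  by move=> a b /setIP[Ha _] /setIP[Hb _]; rewrite lin_charM ?invfM ?(subsetP sHG).
rewrite (eq_forallb_in (fun h _ => invr_eq1 (chi h))).
by case: [forall h in _, _]; rewrite ?mulr0 ?mulr1 // mulrCA [RHS]mulrC [_ / _]mulrC.
Qed.
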